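(* Let $P$ be a finite poset and $\Sigma\colon P\to\mathbf{SimpComp}$ a functor, with colimit $K$ (a finite simplicial complex) and canonical injective simplicial maps $i_p\colon\Sigma_p\hookrightarrow K$ inducing order embeddings $\iota_p\colon F(\Sigma_p)\hookrightarrow F(K)$. If $\sigma\le\tau$ in $F(K)$, then there exists $p\in P$ with $\tau\in\iota_p(F(\Sigma_p))$, and for this $p$ the whole interval $[\sigma,\tau]=\{x\in F(K):\sigma\le x\le\tau\}$ is contained in $\iota_p(F(\Sigma_p))$.
   Context: $\mathbf{SimpComp}$ is the category of finite simplicial complexes and injective simplicial maps; $\Sigma_p=\Sigma(p)$. The colimit $K$ is formed by gluing the $\Sigma_p$ along the diagram maps: its vertex set is $\bigsqcup_p V(\Sigma_p)$ modulo the equivalence relation generated by $x\sim\Sigma(p\le q)(x)$, and its simplices are the classes of simplices of the $\Sigma_p$. For a simplicial complex $X$, $F(X)$ denotes its face poset: the set of simplices ordered by inclusion. *)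

From mathcomp Require Import all_boot all_order.
Unset Printing Implicit Defensive.
Import Order.TTheory.
Local Open Scope order_scope.

Definition is_simpcomp (V : finType) (S : {set {set V}}) : Prop :=
  [/\ forall s, s \in S -> s != set0,
      forall s t : {set V}, s \in S -> t \subset s -> t != set0 -> t \in S &
      forall v, [set v] \in S].

Definition inj_simp_map (V1 V2 : finType) (S1 : {set {set V1}}) (S2 : {set {set V2}})
  (f : V1 -> V2) : Prop :=
  injective f /\ forall s, s \in S1 -> f @: s \in S2.

(* A functor Sigma : P -> SimpComp (P a finite poset), given by vertex types V p,
   complexes S p, and maps f p q : V p -> V q (meaningful for p <= q). *)
Definition is_simp_functor (d : Order.disp_t) (P : finPOrderType d)
  (V : P -> finType) (S : forall p, {set {set V p}})
  (f : forall p q : P, V p -> V q) : Prop :=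
  [/\ forall p, is_simpcomp _ (S p),
      forall p q, p <= q -> inj_simp_map _ _ (S p) (S q) (f p q),
      forall p (v : V p), f p p v = v &
      forall p q r (v : V p), p <= q -> q <= r -> f p r v = f q r (f p q v)].

Section Colim.
Variables (d : Order.disp_t) (P : finPOrderType d) (V : P -> finType)
  (S : forall p, {set {set V p}}) (f : forall p q : P, V p -> V q).

Definition dunion := {p : P & V p}.

Definition glue_step (x y : dunion) : bool :=
  (tag x <= tag y) && (@f (tag x) (tag y) (tagged x) == tagged y).

Definition glue_sym (x y : dunion) : bool := glue_step x y || glue_step y x.

(* vertices of the colimit K: equivalence classes for the equivalence relation
   generated by glue_step (reflexive-transitive closure of its symmetrization) *)
Definition colim_class (x : dunion) : {set dunion} :=
  [set y | connect glue_sym x y].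

Definition colim_inj (p : P) (v : V p) : {set dunion} :=
  colim_class (Tagged V v).

Definition face_image (p : P) : {set {set {set dunion}}} :=
  [set colim_inj p @: s | s : {set V p} in S p].

(* F(K): the simplices of K are the classes of simplices of the Sigma_p *)
Definition colim_faces : {set {set {set dunion}}} :=
  \bigcup_(p : P) face_image p.

End Colim.
Arguments is_simp_functor {d P V} S f.
Arguments dunion {d P} V.
Arguments colim_inj {d P V} f p v.
Arguments face_image {d P V} S f p.
Arguments colim_faces {d P V} S f.

(* If [tau = i_p(s)] and [x <= tau] is any
   face, then [x = i_p(s')] with [s'] the nonempty set of vertices of [s]
   sent into [x]; as [Sigma_p] is closed under nonempty subsets, [s'] is a
   face of [Sigma_p]. *)
From mathcomp Require Import all_boot all_order.
Import Order.TTheory.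
Local Open Scope order_scope.

Lemma imset_setI_preimset [aT rT : finType] [g : aT -> rT] [A : {set aT}]
    [X : {set rT}] :
  X \subset g @: A -> g @: (A :&: g @^-1: X) = X.
Proof.
move=> sub_X_gA; apply/setP => y; apply/imsetP/idP.
- by case=> z; rewrite !inE => /andP[_ gzX] ->.
- move=> yX; have /imsetP[z zA yz] := subsetP sub_X_gA y yX.
  by exists z; rewrite // !inE zA -yz.
Qed.

Lemma simpcomp_imset_neq0 {V W : finType} {S : {set {set V}}} {g : V -> W} {s} :
  is_simpcomp V S -> s \in S -> g @: s != set0.
Proof. by case=> S_neq0 _ _ sS; rewrite imset_eq0 S_neq0. Qed.

Lemma simpcomp_imset_down_closed {V W : finType} {S : {set {set V}}}
    {g : V -> W} {s} {X : {set W}} :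
  is_simpcomp V S -> s \in S -> X \subset g @: s -> X != set0 ->
  X \in [set g @: t | t : {set V} in S].
Proof.
case=> _ S_down _ sS sub_X_gs X_neq0.
have g_trace_X := imset_setI_preimset sub_X_gs.
rewrite -g_trace_X imset_f // (S_down s) ?subsetIl //.
by rewrite -(imset_eq0 g) g_trace_X.
Qed.

Section ColimitFaces.
Context {d : Order.disp_t} {P : finPOrderType d} {V : P -> finType}
  {S : forall p, {set {set V p}}} {f : forall p q : P, V p -> V q}.
Hypothesis HSigma : is_simp_functor S f.

Lemma colim_face_neq0 {x} : x \in colim_faces S f -> x != set0.
Proof.
case: HSigma => complexS _ _ _ /bigcupP[q _ /imsetP[u uS ->]].
exact: simpcomp_imset_neq0 (complexS q) uS.
Qed.

Lemma face_image_down_closed {p tau x} :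
  tau \in face_image S f p -> x \in colim_faces S f -> x \subset tau ->
  x \in face_image S f p.
Proof.
case: HSigma => complexS _ _ _ /imsetP[s sS ->] xK sub_x_tau.
exact: simpcomp_imset_down_closed (complexS p) sS sub_x_tau (colim_face_neq0 xK).
Qed.

End ColimitFaces.

Theorem lemma5p12 (d : Order.disp_t) (P : finPOrderType d) (V : P -> finType)
  (S : forall p, {set {set V p}}) (f : forall p q : P, V p -> V q)
  (HSigma : is_simp_functor S f)
  (Hinj : forall p : P, injective (colim_inj f p))
  (sigma tau : {set {set dunion V}}) :
  sigma \in colim_faces S f -> tau \in colim_faces S f -> (sigma \subset tau)%B ->
  (exists p : P, tau \in face_image S f p) /\
  (forall p : P, tau \in face_image S f p ->
     forall x, x \in colim_faces S f -> (sigma \subset x)%B -> (x \subset tau)%B ->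
       x \in face_image S f p).
Proof.
move=> _ /bigcupP[p0 _ tau_p0] _; split; first by exists p0.
move=> p tau_p x xK _ sub_x_tau.
exact: (face_image_down_closed HSigma tau_p xK sub_x_tau).
Qed.
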